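(* Let $p$ be a prime and $R=\mathcal{O}_{\mathbb{C}_p}$ the valuation ring of $\mathbb{C}_p$. Then $R$ does not satisfy the following condition: for any $r_0,r_1,\dots\in R$ with $r_0+I_0\supseteq r_1+I_1\supseteq r_2+I_2\supseteq\cdots$, the intersection $\bigcap_{i\ge0}(r_i+I_i)$ is nonempty.
   Context: $\mathbb{C}_p$ is the completion of an algebraic closure of $\mathbb{Q}_p$. For a commutative ring $R$, define ideals $I_0=R$ and $I_i=\{r\in R: r^p\in pI_{i-1}\}$ for $i>0$. *)

From HB Require Import structures.
From mathcomp Require Import all_boot all_order all_algebra.
From mathcomp Require Import reals.
Set Implicit Arguments. Unset Strict Implicit. Unset Printing Implicit Defensive.
Import Order.TTheory GRing.Theory Num.Theory.
Local Open Scope ring_scope.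

Section Defs.
Variables (Rl : realType) (K : fieldType) (abs : K -> Rl).

Definition nonarch_abs : Prop :=
  [/\ forall x, 0 <= abs x,
      forall x, abs x = 0 <-> x = 0,
      forall x y, abs (x * y) = abs x * abs y
    & forall x y, abs (x + y) <= Num.max (abs x) (abs y)].

Definition abs_cauchy (u : nat -> K) : Prop :=
  forall eps : Rl, 0 < eps -> exists N : nat,
    forall m n : nat, (N <= m)%N -> (N <= n)%N -> abs (u m - u n) < eps.

Definition abs_converges_to (u : nat -> K) (l : K) : Prop :=
  forall eps : Rl, 0 < eps -> exists N : nat,
    forall n : nat, (N <= n)%N -> abs (u n - l) < eps.

Definition abs_complete : Prop :=
  forall u : nat -> K, abs_cauchy u -> exists l, abs_converges_to u l.

(* closure of Q in K: a copy of Q_p *)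
Definition Qp_part (x : K) : Prop :=
  exists q : nat -> rat, abs_converges_to (fun n => ratr (q n)) x.

Definition is_subfield (A : K -> Prop) : Prop :=
  [/\ A 0, A 1,
      forall x y, A x -> A y -> A (x - y),
      forall x y, A x -> A y -> A (x * y)
    & forall x, A x -> A x^-1].

Definition alg_closed_sub (A : K -> Prop) : Prop :=
  forall q : {poly K}, (forall i, A q`_i) -> (1 < size q)%N ->
    exists x, A x /\ root q x.

Definition algebraic_over (B A : K -> Prop) : Prop :=
  forall a, A a -> exists q : {poly K}, q != 0 /\ (forall i, B q`_i) /\ root q a.

Definition abs_dense (A : K -> Prop) : Prop :=
  forall (x : K) (eps : Rl), 0 < eps -> exists a, A a /\ abs (x - a) < eps.

Definition is_Cp (p : nat) : Prop :=
  [/\ nonarch_abs, abs p%:R = (p%:R)^-1, abs_complete &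
      exists A : K -> Prop,
        [/\ is_subfield A, (forall x, Qp_part x -> A x), alg_closed_sub A,
            algebraic_over Qp_part A & abs_dense A]].

Definition in_O (x : K) : Prop := abs x <= 1.

Fixpoint Iideal (p : nat) (i : nat) : K -> Prop :=
  match i with
  | 0 => in_O
  | i'.+1 => fun x => in_O x /\ exists y, Iideal p i' y /\ x ^+ p = p%:R * y
  end.

Definition nested_coset_condition (p : nat) : Prop :=
  forall r : nat -> K, (forall i, in_O (r i)) ->
    (forall (i : nat) (x : K), in_O x ->
        Iideal p i.+1 (x - r i.+1) -> Iideal p i (x - r i)) ->
    exists x, in_O x /\ forall i, Iideal p i (x - r i).

End Defs.

(* The roots of nonzero rational polynomials form a countable subset of C_p, and it
   is dense: approximate x by an element a of the algebraic closure, the coefficients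
   of a polynomial over Q_p killing a by rationals, and use continuity of roots.
   Enumerate these roots as a_0, a_1, ...  Since I_(n+1) is strictly smaller than
   I_n (witnessed by iterated p-th roots of p), one can choose nested cosets
   c_n + I_n with a_n outside c_(n+1) + I_(n+1).  A point x of their intersection is
   within |p| of some a_m; as pR lies in every I_i, a_m would be in c_(m+1) + I_(m+1). *)

From HB Require Import structures.
From mathcomp Require Import all_boot all_order all_algebra.
From mathcomp Require Import reals ring.
From Stdlib Require Import Classical ClassicalEpsilon.
Set Implicit Arguments. Unset Strict Implicit. Unset Printing Implicit Defensive.
Import Order.TTheory GRing.Theory Num.Theory.
Local Open Scope ring_scope.

Section NonArchimedean.
Variables (Rl : realType) (K : fieldType) (abs : K -> Rl).
Hypothesis Ha : nonarch_abs abs.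

Lemma abs_ge0 x : 0 <= abs x. Proof. by case: Ha. Qed.
Lemma abs_eq0 x : abs x = 0 <-> x = 0. Proof. by case: Ha. Qed.
Lemma absM x y : abs (x * y) = abs x * abs y. Proof. by case: Ha. Qed.
Lemma absD_max x y : abs (x + y) <= Num.max (abs x) (abs y). Proof. by case: Ha. Qed.

Lemma abs0 : abs 0 = 0. Proof. exact/abs_eq0. Qed.

Lemma abs_gt0 x : x != 0 -> 0 < abs x.
Proof.
by move=> x0; rewrite lt_def abs_ge0 andbT; apply: contra x0 => /eqP/abs_eq0->.
Qed.

Lemma abs1 : abs 1 = 1.
Proof.
have a1 : abs 1 != 0 by rewrite gt_eqF // abs_gt0 ?oner_neq0.
by apply: (mulfI a1); rewrite -absM !mulr1.
Qed.

Lemma absN x : abs (- x) = abs x.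
Proof.
have absN1 : abs (-1) = 1.
  apply/eqP; rewrite -(eqrXn2 (ltn0Sn 1)) ?abs_ge0 //.
  by rewrite expr2 -absM mulrNN mulr1 abs1 expr1n.
by rewrite -mulN1r absM absN1 mul1r.
Qed.

Lemma abs_distC x y : abs (x - y) = abs (y - x).
Proof. by rewrite -absN opprB. Qed.

Lemma absX x n : abs (x ^+ n) = abs x ^+ n.
Proof. by elim: n => [|n IH]; rewrite ?expr0 ?abs1 // !exprS absM IH. Qed.

Lemma absV x : abs x^-1 = (abs x)^-1.
Proof.
have [->|x0] := eqVneq x 0; first by rewrite invr0 abs0 invr0.
apply: (mulfI (lt0r_neq0 (abs_gt0 x0))).
by rewrite -absM !mulfV ?abs1 ?(lt0r_neq0 (abs_gt0 x0)).
Qed.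

Lemma absD_le x y b : abs x <= b -> abs y <= b -> abs (x + y) <= b.
Proof. by move=> hx hy; apply: le_trans (absD_max x y) _; rewrite ge_max hx hy. Qed.

Lemma absD_lt x y b : abs x < b -> abs y < b -> abs (x + y) < b.
Proof. by move=> hx hy; apply: le_lt_trans (absD_max x y) _; rewrite gt_max hx hy. Qed.

Lemma abs_sum_le I (r : seq I) (P : pred I) (F : I -> K) b : 0 <= b ->
  (forall i, P i -> abs (F i) <= b) -> abs (\sum_(i <- r | P i) F i) <= b.
Proof.
move=> b0 hF; apply: (big_ind (fun x => abs x <= b)) => //.
- by rewrite abs0.
- by move=> x y; apply: absD_le.
Qed.

Lemma abs_eq_close x y : abs (y - x) < abs x -> abs y = abs x.
Proof.
move=> hyx; have := absD_max y (x - y).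
rewrite [y + _]addrC subrK abs_distC le_max [_ <= abs (y - x)]leNgt hyx orbF => le_xy.
apply/eqP; rewrite eq_le le_xy andbT -[y](subrK x).
by apply: le_trans (absD_max _ _) _; rewrite ge_max lexx (ltW hyx).
Qed.

End NonArchimedean.

Section Subfield.
Variables (K : fieldType) (A : K -> Prop).
Hypothesis HA : is_subfield A.

Lemma subfield0 : A 0. Proof. by case: HA. Qed.
Lemma subfield1 : A 1. Proof. by case: HA. Qed.
Lemma subfieldB x y : A x -> A y -> A (x - y).
Proof. by case: HA => _ _ h _ _; apply: h. Qed.
Lemma subfieldM x y : A x -> A y -> A (x * y).
Proof. by case: HA => _ _ _ h _; apply: h. Qed.
Lemma subfieldN x : A x -> A (- x).
Proof. by move=> Ax; rewrite -sub0r; apply: subfieldB => //; apply: subfield0. Qed.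
Lemma subfieldD x y : A x -> A y -> A (x + y).
Proof. by move=> Ax Ay; rewrite -[y]opprK; apply/subfieldB/subfieldN. Qed.

End Subfield.

Section Ideals.
Variables (Rl : realType) (K : fieldType) (abs : K -> Rl) (p : nat).
Hypothesis Ha : nonarch_abs abs.
Hypothesis p_gt1 : (1 < p)%N.
Hypothesis abs_p : abs p%:R = (p%:R)^-1.

Let p_gt0 : (0 : Rl) < p%:R. Proof. by rewrite ltr0n ltnW. Qed.

Lemma abs_p_lt1 : abs (p%:R : K) < 1.
Proof. by rewrite abs_p invf_lt1 // ltr1n. Qed.

Lemma pnatr_neq0 : (p%:R : K) != 0.
Proof.
apply/eqP => p0; move: abs_p; rewrite p0 (abs0 Ha) => /eqP.
by rewrite eq_sym invr_eq0 gt_eqF.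
Qed.

Lemma abs_p_gt0 : 0 < abs (p%:R : K).
Proof. exact: (abs_gt0 Ha pnatr_neq0). Qed.

Lemma Iideal_in_O i x : Iideal abs p i x -> in_O abs x.
Proof. by case: i => [|i] //= []. Qed.

Lemma Iideal_abs_le i x y : abs x <= abs y -> Iideal abs p i y -> Iideal abs p i x.
Proof.
elim: i x y => [|i IH] x y le_xy; first exact: le_trans.
case=> yO [z [Iz ez]]; split; first exact: le_trans yO.
exists (x ^+ p / p%:R); split; last by rewrite mulrC divfK ?pnatr_neq0.
apply: IH Iz; rewrite (absM Ha) (absV Ha) (absX Ha) ler_pdivrMr ?abs_p_gt0 //.
by rewrite mulrC -(absM Ha) -ez (absX Ha) lerXn2r // nnegrE (abs_ge0 Ha).
Qed.

Lemma IidealN i x : Iideal abs p i x -> Iideal abs p i (- x).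
Proof. by apply: Iideal_abs_le; rewrite (absN Ha). Qed.

Lemma IidealD i x y : Iideal abs p i x -> Iideal abs p i y -> Iideal abs p i (x + y).
Proof.
move=> Ix Iy; have [le_xy|le_yx] := leP (abs x) (abs y).
  by apply: Iideal_abs_le Iy; apply: (absD_le Ha).
by apply: Iideal_abs_le Ix; apply: (absD_le Ha) => //; apply: ltW.
Qed.

Lemma IidealB i x y : Iideal abs p i x -> Iideal abs p i y -> Iideal abs p i (x - y).
Proof. by move=> Ix /IidealN; apply: IidealD. Qed.

Lemma Iideal_succ i x : Iideal abs p i.+1 x -> Iideal abs p i x.
Proof.
elim: i x => [|i IH] x; first by case.
by case=> xO [y [Iy ey]]; split => //; exists y; split => //; apply: IH.
Qed.

(* [|x| <= |p|] gives [|x^p / p| <= |p|^(p-1) <= |p|], so pR lies in every [I_i]. *)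
Lemma Iideal_abs_le_p i x : abs x <= abs (p%:R : K) -> Iideal abs p i x.
Proof.
elim: i x => [|i IH] x le_xp.
  exact: le_trans le_xp (ltW abs_p_lt1).
split; first exact: le_trans le_xp (ltW abs_p_lt1).
exists (x ^+ p / p%:R); split; last by rewrite mulrC divfK ?pnatr_neq0.
apply: IH; rewrite (absM Ha) (absV Ha) (absX Ha) ler_pdivrMr ?abs_p_gt0 //.
apply: le_trans (_ : abs (p%:R : K) ^+ p <= _).
  by rewrite lerXn2r // nnegrE (abs_ge0 Ha).
rewrite -expr2 ler_wiXn2l // ?(abs_ge0 Ha) ?(ltW abs_p_lt1) //.
Qed.

End Ideals.

Section Gap.
Variables (Rl : realType) (K : fieldType) (abs : K -> Rl) (p : nat).
Hypothesis Ha : nonarch_abs abs.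
Hypothesis p_gt1 : (1 < p)%N.
Hypothesis abs_p : abs p%:R = (p%:R)^-1.
Variable A : K -> Prop.
Hypothesis HA : is_subfield A.
Hypothesis Ap : A p%:R.
Hypothesis HAc : alg_closed_sub A.

Lemma exists_root_Xn_subC n c : (0 < n)%N -> A c -> exists w, A w /\ w ^+ n = c.
Proof.
move=> n_gt0 Ac.
have coefA i : A ('X^n - c%:P)`_i.
  rewrite coefB coefXn coefC; apply: subfieldB => //.
    by case: (i == n); [apply: subfield1 | apply: subfield0].
  by case: (i == 0%N); [|apply: subfield0].
have [|w [Aw /rootP]] := HAc coefA; first by rewrite size_XnsubC.
by rewrite !hornerE => /eqP; rewrite subr_eq0 => /eqP wc; exists w.
Qed.

(* The witnesses are u_0 = 1 and u_(n+1) = (p u_n)^(1/p). *)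
Lemma Iideal_gap n : exists u, [/\ A u, Iideal abs p n u & ~ Iideal abs p n.+1 u].
Proof.
elim: n => [|n [u [Au Iu nIu]]].
  exists 1; split; [exact: subfield1 | by rewrite /= /in_O (abs1 Ha) |].
  case=> _ [y [yO /(congr1 abs)]]; rewrite expr1n (abs1 Ha) (absM Ha) => e.
  have : abs (p%:R : K) * abs y <= abs (p%:R : K) * 1 by rewrite ler_wpM2l ?(abs_ge0 Ha).
  by rewrite mulr1 -e => /(lt_le_trans (abs_p_lt1 p_gt1 abs_p)); rewrite ltxx.
have [w [Aw ew]] := exists_root_Xn_subC (ltnW p_gt1) (subfieldM HA Ap Au).
exists w; split => //.
  split; last by exists u.
  have := congr1 abs ew; rewrite (absX Ha) (absM Ha) => e.
  rewrite /in_O -(expr_le1 (ltnW p_gt1)) ?(abs_ge0 Ha) // e.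
  by rewrite mulr_ile1 ?(abs_ge0 Ha) ?(ltW (abs_p_lt1 p_gt1 abs_p)) ?(Iideal_in_O Iu).
case=> _ [y [Iy ey]]; apply: nIu.
by rewrite (mulfI (pnatr_neq0 Ha p_gt1 abs_p) (etrans (esym ew) ey)).
Qed.

End Gap.

Section RootNear.
Variables (Rl : realType) (K : fieldType) (abs : K -> Rl).
Hypothesis Ha : nonarch_abs abs.
Variable A : K -> Prop.
Hypothesis HA : is_subfield A.
Hypothesis HAc : alg_closed_sub A.

(* Synthetic division: [r_j = (r (X - c))_(j+1) + c r_(j+1)], downwards from the top. *)
Lemma coef_divXsubC_in (r : {poly K}) c : A c ->
  (forall i, A (r * ('X - c%:P))`_i) -> forall i, A r`_i.
Proof.
move=> Ac Arc.
have coef_r j : r`_j = (r * ('X - c%:P))`_j.+1 + r`_j.+1 * c.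
  by rewrite mulrBr coefB coefMX coefMC /= subrK.
suff Ar k j : (size r <= j + k)%N -> A r`_j.
  by move=> i; apply: (Ar (size r)); rewrite leq_addl.
elim: k j => [|k IH] j hj.
  by rewrite addn0 in hj; rewrite nth_default //; apply: subfield0.
rewrite coef_r; apply/(subfieldD HA)/(subfieldM HA) => //.
by apply: IH; rewrite addSn -addnS.
Qed.

Lemma exists_linear_factor_in n (P : {poly K}) : size P = n.+2 -> (forall i, A P`_i) ->
  exists b r, [/\ A b, P = r * ('X - b%:P), size r = n.+1 & forall i, A r`_i].
Proof.
move=> sP AP; have [|b [Ab Pb]] := HAc AP; first by rewrite sP.
have [r eP] := factor_theorem _ _ Pb.
exists b, r; split => //; last by apply: (coef_divXsubC_in Ab); rewrite -eP.
have r0 : r != 0 by apply: contra_eq_neq sP => r0; rewrite eP r0 mul0r size_poly0.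
by move: sP; rewrite eP size_Mmonic ?monicXsubC // size_XsubC addn2 => -[].
Qed.

(* [|P(a)|] is [|lead P|] times the product of the distances from [a] to the
   roots of [P], so the root nearest to [a] will do. *)
Lemma exists_root_near a n (P : {poly K}) : size P = n.+2 -> (forall i, A P`_i) ->
  exists b, [/\ A b, root P b & abs (lead_coef P) * abs (a - b) ^+ n.+1 <= abs P.[a]].
Proof.
have ge0 := abs_ge0 Ha.
elim: n P => [|n IH] P sP AP;
  have [b1 [r [Ab1 -> sr Ar]]] := exists_linear_factor_in sP AP;
  rewrite lead_coef_Mmonic ?monicXsubC // hornerM hornerXsubC (absM Ha).
  exists b1; rewrite rootM root_XsubC eqxx orbT; split => //.
  have -> : r = (r`_0)%:P by apply: size1_polyC; rewrite sr.
  by rewrite lead_coefC hornerC expr1.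
have [b2 [Ab2 rb2 hb2]] := IH r sr Ar.
have [le|lt] := leP (abs (a - b1)) (abs (a - b2)).
  exists b1; rewrite rootM root_XsubC eqxx orbT; split => //.
  rewrite exprSr mulrA ler_wpM2r //; apply: le_trans hb2.
  by rewrite ler_wpM2l // lerXn2r ?nnegrE.
exists b2; rewrite rootM rb2; split => //.
rewrite exprSr mulrA; apply: le_trans (_ : abs r.[a] * abs (a - b2) <= _).
  by rewrite ler_wpM2r.
by rewrite ler_wpM2l // ltW.
Qed.

End RootNear.

Lemma exists_small_pos (R : realFieldType) (X Y Z : R) : 0 < X -> 0 < Y -> 0 < Z ->
  exists d, [/\ 0 < d, d < X & d * Z < Y].
Proof.
move=> X0 Y0 Z0; set w := Num.min X (Y / Z).
have w0 : 0 < w by rewrite lt_min X0 divr_gt0.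
have w2 : w / 2 < w by rewrite ltr_pdivrMr // ltr_pMr // ltr1n.
exists (w / 2); split; first by rewrite divr_gt0.
  by apply: lt_le_trans w2 _; rewrite ge_min lexx.
apply: lt_le_trans (_ : w * Z <= Y); first by rewrite ltr_pM2r.
by rewrite -ler_pdivlMr // ge_min lexx orbT.
Qed.

Definition ratpoly (K : fieldType) (s : seq rat) : {poly K} := Poly (map ratr s).

Lemma coef_ratpoly (K : fieldType) (s : seq rat) i : (ratpoly K s)`_i = ratr s`_i.
Proof.
rewrite coef_Poly; have [lt_is|le_si] := ltnP i (size s); first by rewrite (nth_map 0).
by rewrite !nth_default ?size_map // /ratr mul0r.
Qed.

Section Density.
Variables (Rl : realType) (K : fieldType) (abs : K -> Rl).
Hypothesis Ha : nonarch_abs abs.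

Lemma Qp_part_ratr t : Qp_part abs (ratr t).
Proof. by exists (fun=> t) => eps eps0; exists 0%N => n _; rewrite subrr (abs0 Ha). Qed.

Lemma exists_ratpoly_near (q : {poly K}) d : (forall i, Qp_part abs q`_i) -> 0 < d ->
  exists s, size s = size q /\ forall i, abs (q`_i - (ratpoly K s)`_i) < d.
Proof.
move=> Qq d0.
have [f hf] : exists f : nat -> rat, forall i, abs (q`_i - ratr (f i)) < d.
  apply: (choice (fun i t => abs (q`_i - ratr t) < d)) => i.
  have [u hu] := Qq i; have [N hN] := hu d d0.
  by exists (u N); rewrite (abs_distC Ha); apply: hN.
exists (mkseq f (size q)); split; first by rewrite size_mkseq.
move=> i; rewrite coef_ratpoly; have [lt_iq|le_qi] := ltnP i (size q).
  by rewrite nth_mkseq.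
by rewrite !nth_default ?size_mkseq // /ratr mul0r subr0 (abs0 Ha).
Qed.

Lemma abs_hornerB_le (P Q : {poly K}) n a d M :
    (size P <= n)%N -> (size Q <= n)%N -> 0 <= d -> abs a <= M -> 1 <= M ->
    (forall i, abs (P`_i - Q`_i) <= d) ->
  abs (P.[a] - Q.[a]) <= d * M ^+ n.-1.
Proof.
move=> sP sQ d0 aM M1 PQ.
have M0 : 0 <= M by apply: le_trans M1.
rewrite (horner_coef_wide _ sP) (horner_coef_wide _ sQ) -sumrB.
apply: (abs_sum_le Ha); first by rewrite mulr_ge0 ?exprn_ge0.
move=> i _; rewrite -mulrBl (absM Ha) (absX Ha).
rewrite ler_pM ?exprn_ge0 ?(abs_ge0 Ha) //.
apply: le_trans (lerXn2r _ _ _ aM) _; rewrite ?nnegrE ?(abs_ge0 Ha) //.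
by rewrite ler_weXn2l // -ltnS prednK // (leq_ltn_trans (leq0n i)).
Qed.

Lemma lead_coef_near (P Q : {poly K}) : (size Q <= size P)%N ->
    (forall i, abs (P`_i - Q`_i) < abs (lead_coef P)) ->
  size Q = size P /\ abs (lead_coef Q) = abs (lead_coef P).
Proof.
move=> sQP PQ.
have lP0 : 0 < abs (lead_coef P) by apply: le_lt_trans (PQ 0%N); apply: abs_ge0.
have top : abs Q`_(size P).-1 = abs (lead_coef P).
  by apply: (abs_eq_close Ha); rewrite (abs_distC Ha) [X in X - _]lead_coefE.
have P0 : P != 0.
  by rewrite -lead_coef_eq0; apply: contraTneq lP0 => ->; rewrite (abs0 Ha) ltxx.
have sQ : size Q = size P.
  apply/eqP; rewrite eqn_leq sQP leqNgt; apply/negP => ltQP.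
  move: top lP0; rewrite nth_default ?(abs0 Ha) => [<-|]; first by rewrite ltxx.
  by rewrite -ltnS prednK // size_poly_gt0.
by rewrite [lead_coef Q]lead_coefE sQ.
Qed.

Variable A : K -> Prop.
Hypothesis HA : is_subfield A.
Hypothesis QpA : forall x, Qp_part abs x -> A x.
Hypothesis HAc : alg_closed_sub A.
Hypothesis Halg : algebraic_over (Qp_part abs) A.
Hypothesis Adense : abs_dense abs A.

(* Approximate [x] by [a] in [A], a polynomial [q] over [Q_p] vanishing at [a] by a
   rational polynomial [Q], and take the root of [Q] nearest to [a]. *)
Lemma ratpoly_roots_dense x eps : 0 < eps ->
  exists s b, [/\ ratpoly K s != 0, root (ratpoly K s) b & abs (x - b) < eps].
Proof.
move=> eps0.
have [a [Aa xa]] := Adense x eps0.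
have [q [q0 [Qq qa]]] := Halg Aa.
have [m sq] : exists m, size q = m.+2.
  case sq: (size q) => [|[|m]]; last by exists m.
    by move/eqP: sq; rewrite size_poly_eq0 (negPf q0).
  by move: q0 qa; rewrite [q]size1_polyC ?sq // polyC_eq0 rootC => /negPf->.
have c0 : 0 < abs (lead_coef q) by rewrite (abs_gt0 Ha) // lead_coef_eq0.
set M := Num.max 1 (abs a).
have M1 : 1 <= M by rewrite le_max lexx.
have [d [d0 dc dM]] := exists_small_pos c0 (mulr_gt0 c0 (exprn_gt0 m.+1 eps0))
  (exprn_gt0 m.+1 (lt_le_trans ltr01 M1)).
have [s [ss qs]] := exists_ratpoly_near Qq d0.
set Q := ratpoly K s.
have sQq : (size Q <= size q)%N.
  by rewrite -ss; apply: leq_trans (size_Poly _) _; rewrite size_map.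
have [sQ lQ] := lead_coef_near sQq (fun i => lt_trans (qs i) dc).
rewrite sq in sQ.
have AQ i : A Q`_i by rewrite coef_ratpoly; exact/QpA/Qp_part_ratr.
have [b [_ Qb near_b]] := exists_root_near Ha HA HAc a sQ AQ.
exists s, b; split=> //; first by rewrite -size_poly_eq0 sQ.
have Qa : abs Q.[a] <= d * M ^+ m.+1.
  rewrite -[Q.[a]]subr0 -(rootP qa); apply: (abs_hornerB_le (n := m.+2)) => //.
  - by rewrite sQ.
  - by rewrite sq.
  - exact: ltW.
  - by rewrite le_max lexx orbT.
  - by move=> i; rewrite (abs_distC Ha) ltW.
have ab : abs (a - b) < eps.
  rewrite -(ltr_pXn2r (ltn0Sn m)) ?nnegrE ?(ltW eps0) ?(abs_ge0 Ha) //.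
  rewrite -(ltr_pM2l c0) -{1}lQ.
  exact: le_lt_trans (le_trans near_b Qa) dM.
by rewrite -(subrK a x) -addrA; apply: (absD_lt Ha).
Qed.

End Density.

Lemma roots_finite (K : fieldType) (P : {poly K}) : P != 0 ->
  exists l : seq K, forall x, root P x -> x \in l.
Proof.
move=> P0.
suff grow k (l : seq K) : uniq l -> all (root P) l -> (size P <= size l + k)%N ->
    exists l' : seq K, forall x, root P x -> x \in l'.
  exact: (grow (size P) [::]).
elim: k l => [|k IH] l ul rl sPl.
  by have := max_poly_roots P0 rl ul; rewrite ltnNge -[size l]addn0 sPl.
case: (classic (forall x, root P x -> x \in l)) => [l_roots|]; first by exists l.
move=> /(not_all_ex_not _ _) [x xP]; have [Px /negP xl] := imply_to_and _ _ xP.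
by apply: (IH (x :: l)); rewrite /= ?Px ?rl ?ul ?xl ?addSnnS.
Qed.

Lemma ratpoly_roots_enum (K : fieldType) : exists a : nat -> K,
  forall s b, ratpoly K s != 0 -> root (ratpoly K s) b -> exists m, a m = b.
Proof.
have [L HL] : exists L : seq rat -> seq K,
    forall s, ratpoly K s != 0 -> forall b, root (ratpoly K s) b -> b \in L s.
  apply: (choice (fun s l => ratpoly K s != 0 -> forall b, root _ b -> b \in l)) => s.
  have [->|nz] := eqVneq (ratpoly K s) 0; first by exists [::].
  by have [l hl] := roots_finite nz; exists l.
exists (fun m => if unpickle m is Some (s, k) then nth 0 (L s) k else 0).
move=> s b nz sb; exists (pickle (s, index b (L s))).
by rewrite pickleK nth_index // HL.
Qed.

Section Diagonal.
Variables (Rl : realType) (K : fieldType) (abs : K -> Rl) (p : nat).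
Hypothesis Ha : nonarch_abs abs.
Hypothesis p_gt1 : (1 < p)%N.
Hypothesis abs_p : abs p%:R = (p%:R)^-1.
Hypothesis Iideal_strict : forall n, exists u, Iideal abs p n u /\ ~ Iideal abs p n.+1 u.

Lemma nested_cosets_avoiding (a : nat -> K) : exists c : nat -> K,
  [/\ forall i, in_O abs (c i),
      forall i x, in_O abs x -> Iideal abs p i.+1 (x - c i.+1) -> Iideal abs p i (x - c i)
    & forall n, ~ Iideal abs p n.+1 (a n - c n.+1)].
Proof.
have step n c : exists c', Iideal abs p n (c' - c) /\ ~ Iideal abs p n.+1 (a n - c').
  have [a_in|a_notin] := classic (Iideal abs p n.+1 (a n - c)); last first.
    exists c; split => //; rewrite subrr; apply: (Iideal_abs_le_p Ha p_gt1 abs_p).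
    by rewrite (abs0 Ha) (abs_ge0 Ha).
  have [u [Iu nIu]] := Iideal_strict n.
  exists (c + u); split => [|a_in']; first by rewrite addrC addKr.
  apply: nIu; have -> : u = (a n - c) - (a n - (c + u)) by ring.
  exact: (IidealB Ha p_gt1 abs_p).
have [f hf] := choice (fun nc c' => Iideal abs p nc.1 (c' - nc.2) /\
  ~ Iideal abs p nc.1.+1 (a nc.1 - c')) (fun nc => step nc.1 nc.2).
pose c := fix c n := if n is n'.+1 then f (n', c n') else 0.
have hc n : Iideal abs p n (c n.+1 - c n) /\ ~ Iideal abs p n.+1 (a n - c n.+1).
  exact: (hf (n, c n)).
exists c; split => [i|i x _ xc|n]; last exact: (hc n).2.
  elim: i => [|i IH]; first by rewrite /in_O (abs0 Ha) ler01.
  rewrite -(subrK (c i) (c i.+1)).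
  exact: (IidealD Ha p_gt1 abs_p (i := 0) (Iideal_in_O (hc i).1) IH).
rewrite -(subrK (c i.+1) x) -addrA.
exact: (IidealD Ha p_gt1 abs_p (Iideal_succ xc) (hc i).1).
Qed.

End Diagonal.

Theorem lemma5p5 (p : nat) (Rl : realType) (K : fieldType) (abs : K -> Rl) :
  prime p -> is_Cp abs p -> ~ nested_coset_condition abs p.
Proof.
move=> /prime_gt1 p_gt1 [Ha abs_p _ [A [HA QpA HAc Halg Adense]]] Hnest.
have Ap : A p%:R by rewrite -ratr_nat; apply/QpA/(Qp_part_ratr Ha).
have Iideal_strict n : exists u, Iideal abs p n u /\ ~ Iideal abs p n.+1 u.
  by have [u [_ Iu nIu]] := Iideal_gap Ha p_gt1 abs_p HA Ap HAc n; exists u.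
have [a a_onto] := ratpoly_roots_enum K.
have [c [cO c_nested a_avoid]] :=
  nested_cosets_avoiding Ha p_gt1 abs_p Iideal_strict a.
have [x [_ xc]] := Hnest c cO c_nested.
have [s [b [s_nz sb xb]]] :=
  ratpoly_roots_dense Ha HA QpA HAc Halg Adense x (abs_p_gt0 Ha p_gt1 abs_p).
have [m am] := a_onto s b s_nz sb.
apply: (a_avoid m); rewrite am -(subrK x b) -addrA.
apply: (IidealD Ha p_gt1 abs_p) (xc m.+1).
by apply: (Iideal_abs_le_p Ha p_gt1 abs_p); rewrite (abs_distC Ha) ltW.
Qed.
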